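(* Let $p$ be a prime, $\mathbb{C}_p$ the field of complex $p$-adic numbers with norm $|\cdot|_p$, $a,b,c\in\mathbb{C}_p$ with $b\neq0$, $c\neq ab$, and $f(x)=\frac{x+a}{bx+c}$ for $x\neq -c/b$. Fix a square root $\sqrt{(c-1)^2+4ab}\in\mathbb{C}_p$ and let $x_{1}=\frac{1-c+\sqrt{(c-1)^2+4ab}}{2b}$, $x_2=\frac{1-c-\sqrt{(c-1)^2+4ab}}{2b}$ (the fixed points of $f$). Assume $$\left|\frac{c-ab}{(bx_i+c)^2}\right|_p=1\ (i=1,2)\qquad\text{and}\qquad \left|\frac{b}{\sqrt{c-ab}}\right|_p<1,$$ and put $\varepsilon_c=\left|\frac{\sqrt{c-ab}}{b}\right|_p-1$. Then: (i) if $\left|\frac{\sqrt{(c-1)^2+4ab}}{b}\right|_p\ge 1+\varepsilon_c$, then $SI(x_1)\cap SI(x_2)=\emptyset$; (ii) otherwise $SI(x_1)=SI(x_2)$.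
   Context: For $x_0\in\mathbb{C}_p$ and $r>0$: $V_r(x_0)=\{x:|x-x_0|_p<r\}$ and $S_r(x_0)=\{x:|x-x_0|_p=r\}$. For a fixed point $x_0$ of $f$, a ball $V_r(x_0)$ (contained in the domain of $f$) is a Siegel disk if every sphere $S_\rho(x_0)$ with $\rho<r$ is invariant, i.e. for every $x\in S_\rho(x_0)$ all iterates $f^n(x)$ are defined and lie in $S_\rho(x_0)$. The maximum Siegel disk $SI(x_0)$ is the union of all Siegel disks centered at $x_0$. *)

From HB Require Import structures.
From mathcomp Require Import all_boot all_order all_algebra.
From mathcomp Require Import all_classical all_reals.
Set Implicit Arguments. Unset Strict Implicit. Unset Printing Implicit Defensive.
Import Order.TTheory GRing.Theory Num.Theory.
Local Open Scope ring_scope.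
Local Open Scope classical_set_scope.

(* Characterization of (K, absv) as (isometric to) the field C_p of complex
   p-adic numbers: an algebraically closed field K with a non-archimedean
   absolute value absv : K -> R (R the real numbers), whose restriction to the
   naturals (hence to Q) is the p-adic absolute value, which is complete, and
   in which the elements algebraic over Q are dense. *)
Definition is_Cp (p : nat) (R : realType) (K : closedFieldType) (absv : K -> R) : Prop :=
  [/\ (forall x : K, 0 <= absv x),
      (forall x : K, absv x = 0 <-> x = 0),
      (forall x y : K, absv (x * y) = absv x * absv y),
      (forall x y : K, absv (x + y) <= Num.max (absv x) (absv y)) &
    [/\ (forall n : nat, (0 < n)%N -> absv (n%:R) = ((p%:R : R) ^+ (logn p n))^-1),
      (forall u : nat -> K,
          (forall e : R, 0 < e -> exists N : nat, forall m n : nat,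
              (N <= m)%N -> (N <= n)%N -> absv (u m - u n) < e) ->
          exists l : K, forall e : R, 0 < e -> exists N : nat, forall n : nat,
              (N <= n)%N -> absv (u n - l) < e)
    & (forall (x : K) (e : R), 0 < e -> exists y : K,
          (exists q : {poly rat}, q != 0 /\ root (map_poly (fun r : rat => ratr r) q) y)
          /\ absv (x - y) < e)]].

Section Dyn.
Variables (R : realType) (K : closedFieldType) (absv : K -> R) (a b c : K).

Definition mobius (x : K) : K := (x + a) / (b * x + c).
Definition in_dom (x : K) : Prop := x != - c / b.

Definition ballV (x0 : K) (r : R) : set K := [set x | absv (x - x0) < r].
Definition sphereS (x0 : K) (r : R) : set K := [set x | absv (x - x0) = r].

Definition siegel_disk (x0 : K) (r : R) : Prop :=
  [/\ 0 < r, in_dom x0 /\ mobius x0 = x0,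
      (forall x, ballV x0 r x -> in_dom x)
    & (forall rho : R, 0 <= rho -> rho < r -> forall x, sphereS x0 rho x ->
         forall n : nat, in_dom (iter n mobius x) /\ sphereS x0 rho (iter n mobius x))].

Definition SI (x0 : K) : set K :=
  [set x | exists r : R, siegel_disk x0 r /\ ballV x0 r x].
End Dyn.

From HB Require Import structures.
From mathcomp Require Import all_boot all_order all_algebra.
From mathcomp Require Import all_classical all_reals.
From mathcomp Require Import ring.
Set Implicit Arguments. Unset Strict Implicit. Unset Printing Implicit Defensive.
Import Order.TTheory GRing.Theory Num.Theory.
Local Open Scope ring_scope.
Local Open Scope classical_set_scope.

(* At a fixed point x0 the identity (1 - b x0)(b x0 + c) = c - ab gives
   f x - x0 = (x - x0) (1 - b x0) / (b x + c).  When |f'(x0)| = 1, i.e.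
   |c - ab| = |b x0 + c|^2, the ultrametric inequality makes f an isometry
   around x0 on the ball reaching up to the pole -c/b, so SI(x0) is exactly the
   ball of radius |(b x0 + c)/b| = |sqrt(c - ab)/b|, the same radius for both
   fixed points.  Two ultrametric balls of equal radius r are equal or disjoint
   according as the distance |x1 - x2| = |D/b| of their centres is < r or not. *)

Section AbsoluteValue.
Variables (R : realFieldType) (K : fieldType) (absv : K -> R).
Hypotheses (absv_ge0 : forall x, 0 <= absv x)
  (absv_eq0 : forall x, absv x = 0 <-> x = 0)
  (absvM : forall x y, absv (x * y) = absv x * absv y).

Lemma absv0 : absv 0 = 0. Proof. exact/absv_eq0. Qed.

Lemma absv_neq0 x : x != 0 -> absv x != 0.
Proof. by apply: contra => /eqP /absv_eq0 ->. Qed.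

Lemma absv1 : absv 1 = 1.
Proof.
apply/(mulfI (absv_neq0 (oner_neq0 K))).
by rewrite -absvM !mulr1.
Qed.

Lemma absvN x : absv (- x) = absv x.
Proof.
suff absvN1 : absv (-1) = 1 by rewrite -mulN1r absvM absvN1 mul1r.
have sq1 : absv (-1) ^+ 2 = 1 ^+ 2 by rewrite expr2 -absvM mulrNN mulr1 absv1 expr1n.
by apply/eqP; rewrite -(eqrXn2 (isT : (0 < 2)%N)) ?absv_ge0 ?sq1.
Qed.

Lemma absvBC x y : absv (x - y) = absv (y - x).
Proof. by rewrite -absvN opprB. Qed.

Lemma absvV x : absv x^-1 = (absv x)^-1.
Proof.
have [->|x_neq0] := eqVneq x 0; first by rewrite invr0 absv0 invr0.
apply/(mulfI (absv_neq0 x_neq0)).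
by rewrite -absvM !mulfV ?absv1 ?absv_neq0.
Qed.

Lemma absvX x n : absv (x ^+ n) = absv x ^+ n.
Proof. by elim: n => [|n IHn]; rewrite ?absv1 // !exprS absvM IHn. Qed.

Hypothesis absvD : forall x y, absv (x + y) <= Num.max (absv x) (absv y).

Lemma absvD_lt x y r : absv x < r -> absv y < r -> absv (x + y) < r.
Proof. by move=> xr yr; apply: le_lt_trans (absvD x y) _; rewrite gt_max xr. Qed.

Lemma absvD_eqr u v : absv u < absv v -> absv (u + v) = absv v.
Proof.
move=> uv; apply/eqP; rewrite eq_le (le_trans (absvD u v)) ?(max_idPr (ltW uv)) //=.
have := absvD (u + v) (- u); rewrite addrC addKr absvN le_max.
by case/orP=> // vu; move: (lt_le_trans uv vu); rewrite ltxx.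
Qed.

End AbsoluteValue.

Section UltrametricBalls.
Variables (R : realType) (K : closedFieldType) (absv : K -> R).
Hypotheses (absv_ge0 : forall x, 0 <= absv x)
  (absv_eq0 : forall x, absv x = 0 <-> x = 0)
  (absvM : forall x y, absv (x * y) = absv x * absv y)
  (absvD : forall x y, absv (x + y) <= Num.max (absv x) (absv y)).

Lemma ballV_eq x y r : absv (x - y) < r -> ballV absv x r = ballV absv y r.
Proof.
move=> xy; apply/seteqP; split=> z; rewrite /ballV /= => zr.
  by rewrite -(subrKA x); apply: absvD_lt.
by rewrite -(subrKA y); apply: absvD_lt; rewrite // absvBC.
Qed.

Lemma ballV_disjoint x y r :
  r <= absv (x - y) -> ballV absv x r `&` ballV absv y r = set0.
Proof.
move=> ry; apply/seteqP; split=> // z [/= zx zy].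
have : absv (x - y) < r by rewrite -(subrKA z); apply: absvD_lt; rewrite // absvBC.
by rewrite ltNge ry.
Qed.

End UltrametricBalls.

Section IndifferentFixedPoint.
Variables (R : realType) (K : closedFieldType) (absv : K -> R).
Hypotheses (absv_ge0 : forall x, 0 <= absv x)
  (absv_eq0 : forall x, absv x = 0 <-> x = 0)
  (absvM : forall x y, absv (x * y) = absv x * absv y)
  (absvD : forall x y, absv (x + y) <= Num.max (absv x) (absv y)).
Variables (a b c x0 : K).
Hypotheses (b_neq0 : b != 0) (fixed_x0 : x0 * (b * x0 + c) = x0 + a)
  (indifferent_x0 : absv ((c - a * b) / (b * x0 + c) ^+ 2) = 1).

Let f := mobius a b c.
Let rad := absv ((b * x0 + c) / b).

Let a_fixed : a = x0 * (b * x0 + c) - x0.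
Proof. by rewrite fixed_x0 addrC addKr. Qed.

Lemma in_domE x : in_dom b c x <-> b * x + c != 0.
Proof.
have -> : b * x + c = b * (x - - c / b) by field.
by rewrite mulf_eq0 (negbTE b_neq0) /= subr_eq0.
Qed.

Lemma denom_x0_neq0 : b * x0 + c != 0.
Proof.
apply: contra_eqN indifferent_x0 => /eqP ->.
by rewrite expr0n /= invr0 mulr0 absv0 // eq_sym oner_neq0.
Qed.

Lemma mobius_fixed : f x0 = x0.
Proof. by rewrite /f /mobius -fixed_x0 mulfK ?denom_x0_neq0. Qed.

Lemma absv_c_sub_ab : absv (c - a * b) = absv (b * x0 + c) ^+ 2.
Proof.
have sq_neq0 : absv ((b * x0 + c) ^+ 2) != 0.
  by rewrite absv_neq0 // expf_neq0 // denom_x0_neq0.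
by rewrite -absvX // -[LHS](divfK sq_neq0) -absvV // -absvM indifferent_x0 mul1r.
Qed.

Lemma absv_sqrt_c_sub_ab s : s ^+ 2 = c - a * b -> absv s = absv (b * x0 + c).
Proof.
move=> sq_s; apply/eqP; rewrite -(eqrXn2 (isT : (0 < 2)%N)) ?absv_ge0 //.
by rewrite -absvX // sq_s absv_c_sub_ab.
Qed.

Lemma absv_1_sub_bx0 : absv (1 - b * x0) = absv (b * x0 + c).
Proof.
have factor : (1 - b * x0) * (b * x0 + c) = c - a * b by rewrite a_fixed; ring.
apply/(mulIf (absv_neq0 absv_eq0 denom_x0_neq0)).
by rewrite -absvM factor absv_c_sub_ab expr2.
Qed.

Lemma mobiusB_fixed x : b * x + c != 0 ->
  f x - x0 = (x - x0) * (1 - b * x0) / (b * x + c).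
Proof.
move=> den_neq0; apply: (mulIf den_neq0).
by rewrite mulrBl /f /mobius !divfK // a_fixed; ring.
Qed.

Lemma absv_denom_near x : absv (x - x0) < rad -> absv (b * x + c) = absv (b * x0 + c).
Proof.
have absvb_gt0 : 0 < absv b by rewrite lt_def absv_neq0 ?absv_ge0.
move=> x_near; have -> : b * x + c = b * (x - x0) + (b * x0 + c) by ring.
apply: absvD_eqr => //; rewrite absvM.
by move: x_near; rewrite /rad absvM absvV // ltr_pdivlMr // mulrC.
Qed.

Lemma absv_mobiusB x : absv (x - x0) < rad ->
  b * x + c != 0 /\ absv (f x - x0) = absv (x - x0).
Proof.
move=> x_near; have den := absv_denom_near x_near.
have den_neq0 : b * x + c != 0.
  by apply: contra_eq_neq den => ->; rewrite absv0 // eq_sym absv_neq0 ?denom_x0_neq0.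
split=> //; rewrite mobiusB_fixed // !absvM absvV // den absv_1_sub_bx0.
by rewrite mulfK // absv_neq0 ?denom_x0_neq0.
Qed.

Lemma absv_pole_sub : absv (- c / b - x0) = rad.
Proof. by rewrite absvBC // /rad; congr absv; field. Qed.

Lemma siegel_disk_pole : siegel_disk absv a b c x0 rad.
Proof.
split.
- by rewrite lt_def absv_ge0 absv_neq0 // mulf_neq0 ?invr_neq0 ?denom_x0_neq0.
- by split; [apply/in_domE/denom_x0_neq0 | apply: mobius_fixed].
- by move=> x /absv_mobiusB [den_neq0 _]; apply/in_domE.
move=> rho _ rho_lt x x_rho n.
have orbit_rho : sphereS absv x0 rho (iter n f x).
  elim: n => [//|n IHn]; rewrite /sphereS /= in IHn *.
  by rewrite -IHn; apply: (absv_mobiusB _).2; rewrite IHn.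
split=> //; apply/in_domE; apply: (absv_mobiusB _).1.
by rewrite orbit_rho.
Qed.

Lemma siegel_disk_le r : siegel_disk absv a b c x0 r -> r <= rad.
Proof.
case=> _ _ dom_ball _; rewrite leNgt; apply/negP => rad_lt.
have := dom_ball (- c / b); rewrite /ballV /= absv_pole_sub => /(_ rad_lt).
by rewrite /in_dom eqxx.
Qed.

Lemma SI_ballV : SI absv a b c x0 = ballV absv x0 rad.
Proof.
apply/seteqP; split=> x; last by exists rad; split; first exact: siegel_disk_pole.
by case=> r [/siegel_disk_le r_le x_r]; apply: lt_le_trans r_le.
Qed.

Lemma SI_ballV_sqrt s : s ^+ 2 = c - a * b -> SI absv a b c x0 = ballV absv x0 (absv (s / b)).
Proof. by move=> sq_s; rewrite SI_ballV /rad !absvM (absv_sqrt_c_sub_ab sq_s). Qed.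

End IndifferentFixedPoint.

Lemma fixed_quadratic_root (F : fieldType) (a b c D : F) :
  2 != 0 :> F -> b != 0 -> D ^+ 2 = (c - 1) ^+ 2 + 4 * a * b ->
  let x := (1 - c + D) / (2 * b) in x * (b * x + c) = x + a.
Proof.
move=> two_neq0 b_neq0 sq_D x; apply: subr0_eq.
have four_neq0 : 4 != 0 :> F by rewrite -[4%N]/(2 * 2)%N natrM mulf_neq0.
have -> : x * (b * x + c) - (x + a) = (D ^+ 2 - ((c - 1) ^+ 2 + 4 * a * b)) / (4 * b).
  by rewrite /x; field; rewrite b_neq0 four_neq0 two_neq0.
by rewrite sq_D subrr mul0r.
Qed.

Lemma is_Cp_natr_neq0 p (R : realType) (K : closedFieldType) (absv : K -> R) n :
  (0 < p)%N -> is_Cp p absv -> (0 < n)%N -> n%:R != 0 :> K.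
Proof.
move=> p_gt0 [_ absv_eq0 _ _ [absv_natr _ _]] n_gt0.
apply: contra_eqN (absv_natr n n_gt0) => /eqP ->.
by rewrite (absv0 absv_eq0) eq_sym invr_eq0 expf_neq0 // pnatr_eq0 -lt0n.
Qed.

Theorem theorem3p3 (p : nat) (R : realType) (K : closedFieldType) (absv : K -> R)
  (a b c D s : K) :
  prime p -> is_Cp p absv ->
  b != 0 -> c != a * b ->
  D ^+ 2 = (c - 1) ^+ 2 + 4 * a * b ->
  s ^+ 2 = c - a * b ->
  let x1 := (1 - c + D) / (2 * b) in
  let x2 := (1 - c - D) / (2 * b) in
  absv ((c - a * b) / (b * x1 + c) ^+ 2) = 1 ->
  absv ((c - a * b) / (b * x2 + c) ^+ 2) = 1 ->
  absv (b / s) < 1 ->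
  let eps_c := absv (s / b) - 1 in
  (1 + eps_c <= absv (D / b) -> SI absv a b c x1 `&` SI absv a b c x2 = set0) /\
  (absv (D / b) < 1 + eps_c -> SI absv a b c x1 = SI absv a b c x2).
Proof.
move=> p_prime Cp b_neq0 _ sq_D sq_s x1 x2 ind1 ind2 _ eps_c.
have two_neq0 : 2 != 0 :> K by apply: is_Cp_natr_neq0 (prime_gt0 p_prime) Cp _.
have [absv_ge0 absv_eq0 absvM absvD _] := Cp.
have fix1 : x1 * (b * x1 + c) = x1 + a by apply: fixed_quadratic_root.
have fix2 : x2 * (b * x2 + c) = x2 + a.
  by apply: fixed_quadratic_root; rewrite // sqrrN.
rewrite (SI_ballV_sqrt absv_ge0 absv_eq0 absvM absvD b_neq0 fix1 ind1 sq_s).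
rewrite (SI_ballV_sqrt absv_ge0 absv_eq0 absvM absvD b_neq0 fix2 ind2 sq_s).
have -> : D / b = x1 - x2 by rewrite /x1 /x2; field; rewrite b_neq0 two_neq0.
rewrite /eps_c addrC subrK; split.
- by move=> far; apply: ballV_disjoint absv_ge0 absv_eq0 absvM absvD _ _ _ far.
- by move=> near; apply: ballV_eq absv_ge0 absv_eq0 absvM absvD _ _ _ near.
Qed.
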